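(* For every $\alpha\in[3,\omega]$, the set $\mathsf{W}^N_3$ is first-order definable (without parameters) in the structure $(\mathsf{W}^N_\alpha,\prec,\Diamond_1,\Diamond_3)$.
   Context: Words are finite strings over $\mathbb{N}$; $\mathsf{W}_\omega$ is the set of all words, $\Lambda$ the empty word, $AB$ concatenation. For $k\in\mathbb{N}$, $\mathsf{S}_k$ is the set of words all of whose symbols are $\ge k$; for $\alpha\in\mathbb{N}\cup\{\omega\}$, $\mathsf{W}_\alpha$ is the set of words all of whose symbols are $\le\alpha$. Given a linear preorder $\precsim$ with $A\sim B$ iff $A\precsim B\wedge B\precsim A$ and $A\prec B$ iff $A\precsim B\wedge\neg B\precsim A$, a finite sequence $(A_1,\dots,A_p)$ is lexicographically not greater than $(B_1,\dots,B_q)$ iff either $p\le q$ and $A_i\sim B_i$ for all $i\le p$, or there is $s<\min(p,q)$ with $A_i\sim B_i$ for $i\le s$ and $A_{s+1}\prec B_{s+1}$. A lexicographically maximal subsequence of a finite sequence is a subsequence that is lexicographically not less than every subsequence. The linear preorder $\precsim$ on $\mathsf{W}_\omega$ is defined by recursion on (largest symbol of $AB$) $-$ (smallest symbol of $AB$): $\Lambda\precsim\Lambda$; if $AB$ is nonempty with minimal symbol $n$, write uniquely $A=A_1n\cdots nA_k$, $B=B_1n\cdots nB_l$ ($k,l\ge1$) with $A_i,B_j\in\mathsf{S}_{n+1}$ (possibly empty); let $C,D$ be lexicographically maximal subsequences of $(A_1,\dots,A_k)$, $(B_1,\dots,B_l)$; then $A\precsim B$ iff $C$ is lexicographically not greater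 than $D$. The set $\mathsf{NF}$: $\Lambda\in\mathsf{NF}$; a word with minimal symbol $n$, written $A_1n\cdots nA_k$ with $k\ge2$, $A_i\in\mathsf{S}_{n+1}$, is in $\mathsf{NF}$ iff $A_k\precsim\dots\precsim A_1$ and all $A_i\in\mathsf{NF}$. Every word is $\sim$-equivalent to exactly one word of $\mathsf{NF}$. For $A\in\mathsf{NF}$, $\Diamond_nA$ is the unique word of $\mathsf{NF}$ equivalent to $An$. $\mathsf{W}^N_\alpha=\mathsf{W}_\alpha\cap\mathsf{NF}$. *)

From mathcomp Require Import all_boot.
Set Implicit Arguments. Unset Strict Implicit. Unset Printing Implicit Defensive.

Definition word := seq nat.

(* Largest / smallest symbol of a word (0 / arbitrary for the empty word). *)
Definition maxsym (A : word) : nat := foldr maxn 0 A.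
Definition minsym (A : word) : nat := foldr minn (head 0 A) A.

(* [wsplit n A] = [:: A_1; ...; A_k] where A = A_1 n A_2 n ... n A_k. *)
Fixpoint wsplit (n : nat) (A : word) : seq word :=
  match A with
  | [::] => [:: [::]]
  | x :: s =>
      if x == n then [::] :: wsplit n s
      else match wsplit n s with
           | h :: t => (x :: h) :: t
           | [::] => [:: [:: x]]
           end
  end.

Fixpoint subseqs (T : Type) (s : seq T) : seq (seq T) :=
  match s with
  | [::] => [:: [::]]
  | x :: s' => let r := subseqs s' in map (cons x) r ++ r
  end.

Fixpoint lexle (T : Type) (le : T -> T -> bool) (s t : seq T) : bool :=
  match s, t with
  | [::], _ => true
  | _ :: _, [::] => false
  | x :: s', y :: t' =>
      if le x y && le y x then lexle le s' t'
      else le x y && ~~ le y x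
  end.

Definition lexmax (T : Type) (le : T -> T -> bool) (s C : seq T) : bool :=
  all (fun X => lexle le X C) (subseqs s).

(* The preorder on words, by recursion (with fuel) on max - min of AB. *)
Fixpoint wle_fuel (f : nat) (A B : word) : bool :=
  match f with
  | 0 => true
  | f'.+1 =>
      if A ++ B is [::] then true else
      let n := minsym (A ++ B) in
      let As := wsplit n A in
      let Bs := wsplit n B in
      let le := wle_fuel f' in
      has (fun C => lexmax le As C &&
             has (fun D => lexmax le Bs D && lexle le C D) (subseqs Bs))
          (subseqs As)
  end.

(* A ≾ B.  The fuel (max symbol of AB) + 1 exceeds max - min of AB. *)
Definition wle (A B : word) : bool := wle_fuel (maxsym (A ++ B)).+1 A B.
Definition wequiv (A B : word) : bool := wle A B && wle B A.
Definition wlt (A B : word) : bool := wle A B && ~~ wle B A.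

Fixpoint isNF_fuel (f : nat) (A : word) : bool :=
  match f with
  | 0 => A == [::]
  | f'.+1 =>
      if A is [::] then true else
      let As := wsplit (minsym A) A in
      sorted (fun X Y => wle Y X) As && all (isNF_fuel f') As
  end.
Definition isNF (A : word) : bool := isNF_fuel (size A).+1 A.

(* alpha ∈ N ∪ {ω}: [Some a] is a, [None] is ω.  W_alpha. *)
Definition inW (alpha : option nat) (A : word) : bool :=
  if alpha is Some a then all (fun x => x <= a) A else true.

Definition inWN (alpha : option nat) (A : word) : bool := inW alpha A && isNF A.

(* Graph of ◇_n: B = ◇_n A iff B ∈ NF and B ~ A n. *)
Definition diamond_graph (n : nat) (A B : word) : bool :=
  isNF B && wequiv B (rcons A n).

(* First-order formulas in the signature (≺, ◇_1, ◇_3), with the unary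
   functions represented by their graphs, plus equality.  Variables are nat. *)
Inductive form : Type :=
  | FLt  : nat -> nat -> form
  | FEq  : nat -> nat -> form
  | FD1  : nat -> nat -> form
  | FD3  : nat -> nat -> form
  | FNot : form -> form
  | FAnd : form -> form -> form
  | FEx  : nat -> form -> form.

Definition upd (e : nat -> word) (i : nat) (B : word) : nat -> word :=
  fun j => if j == i then B else e j.

Fixpoint sat (alpha : option nat) (e : nat -> word) (phi : form) : Prop :=
  match phi with
  | FLt i j => wlt (e i) (e j)
  | FEq i j => e i = e j
  | FD1 i j => diamond_graph 1 (e i) (e j)
  | FD3 i j => diamond_graph 3 (e i) (e j)
  | FNot p => ~ sat alpha e p
  | FAnd p q => sat alpha e p /\ sat alpha e q
  | FEx i p => exists B, inWN alpha B /\ sat alpha (upd e i B) p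
  end.

Definition fo_definable (alpha : option nat) (S : word -> Prop) : Prop :=
  exists phi : form, forall e : nat -> word,
    (forall i, inWN alpha (e i)) -> (sat alpha e phi <-> S (e 0)).

(* Call c ◇_3-closed if ◇_3 y ≺ c whenever y ≺ c.  The one-letter word 4 is
   ◇_3-closed and separates W_3 from the rest: every word over {0,...,3} lies
   strictly below it, every word with a symbol > 3 lies above it, and appending
   a 3 keeps a word inside W_3.  On the other hand no element of W_3 above Λ is
   ◇_3-closed, because the words 3^j = ◇_3^j Λ are cofinal in W_3 (a word of
   length < j lies below 3^j).  So W^N_3 consists of the x lying strictly below
   every ◇_3-closed c that is not the minimum, which is first-order.  All
   comparisons use that ≾ is a total preorder which may be evaluated by
   splitting at any lower bound of the symbols, not only at the minimal one. *)

From mathcomp Require Import all_boot zify.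
Set Implicit Arguments. Unset Strict Implicit. Unset Printing Implicit Defensive.

Lemma exists_max_in (T : eqType) (R : rel T) (s : seq T) :
  {in s &, total R} -> {in s & &, transitive R} -> s != [::] ->
  exists2 m, m \in s & {in s, forall y, R y m}.
Proof.
move=> Rtot Rtr s0; set geR := fun x y => R y x.
have geR_tot : {in s &, total geR} by move=> x y xs ys; rewrite /geR orbC Rtot.
have geR_tr : {in s & &, transitive geR}.
  by move=> y x z ys xs zs /= xy yz; apply: Rtr yz xy.
have := sort_sorted_in geR_tot (allss s); have := mem_sort geR s.
have := size_sort geR s; case: (sort geR s) => [/esym/eqP|m t _ mem_sorted sorted_mt].
  by rewrite size_eq0 (negbTE s0).
have ms : m \in s by rewrite -mem_sorted mem_head.
exists m => // y; rewrite -mem_sorted inE => /predU1P[->|yt].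
  by have := Rtot m m ms ms; rewrite orbb.
have mts : all [in s] (m :: t) by apply/allP => z; rewrite mem_sorted.
by have /allP := order_path_min_in geR_tr mts sorted_mt; apply.
Qed.

Section Lexicographic.

Variables (T : eqType) (le : rel T).

Definition lexmax_le (s t : seq T) : bool :=
  has (fun C => lexmax le s C &&
         has (fun D => lexmax le t D && lexle le C D) (subseqs t))
      (subseqs s).

Lemma mem_subseqs (s C : seq T) : (C \in subseqs s) = subseq C s.
Proof.
elim: s C => [|x s IH] C /=; first by rewrite inE; case: C.
rewrite mem_cat IH; case: C => [|c C] /=; first by rewrite sub0seq orbT.
case: eqP => [->|cx]; last by case: mapP => // -[D _ [/cx]].
have cons_inj : injective (cons x) by move=> ? ? [].
rewrite (mem_map cons_inj) IH orb_idr //.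
by move=> xC; apply: subseq_trans xC; apply: subseq_cons.
Qed.

Lemma lexle_uniform (s t : seq T) :
  size s <= size t -> {in s & t, forall x y, le x y} -> lexle le s t.
Proof.
elim: s t => [|x s IH] [|y t] //= st le_st.
rewrite le_st ?mem_head //= IH // => [|a b ai bj]; first by case: (le y x).
by apply: le_st; rewrite inE ?ai ?bj orbT.
Qed.

Lemma lexle_uniformN (s t : seq T) :
  size t < size s -> {in t & s, forall x y, le x y} -> ~~ lexle le s t.
Proof.
elim: t s => [|y t IH] [|x s] //= ts le_ts.
rewrite (le_ts y x) ?mem_head //= andbF.
case: (le x y) => //; apply: IH => // a b ai bj.
by apply: le_ts; rewrite inE ?ai ?bj orbT.
Qed.

Lemma lexle_cons_lt x y (s t : seq T) : le x y -> ~~ le y x -> lexle le (x :: s) (y :: t).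
Proof. by move=> /= -> /negbTE ->. Qed.

Lemma lexle_single_cons x y (t : seq T) : lexle le [:: x] (y :: t) = le x y.
Proof. by rewrite /=; case: (le x y); case: (le y x). Qed.

Lemma lexmax_lexle (s C : seq T) : lexmax le s C -> lexle le s C.
Proof. by move/allP; apply; rewrite mem_subseqs subseq_refl. Qed.

Lemma lexmax_self (s : seq T) : {in s &, forall x y, le x y} -> lexmax le s s.
Proof.
move=> le_s; apply/allP => C; rewrite mem_subseqs => Cs.
apply: lexle_uniform; first exact: size_subseq.
by move=> x y /(mem_subseq Cs); apply: le_s.
Qed.

Lemma lexmax_le1 a b : le a a -> le b b -> lexmax_le [:: a] [:: b] = le a b.
Proof.
move=> aa bb; rewrite /lexmax_le /lexmax /= aa bb /=.
by case: (le a b); case: (le b a).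
Qed.

Section TotalPreorder.

Variable X : pred T.
Hypothesis le_total : {in X &, total le}.
Hypothesis le_trans : {in X & &, transitive le}.

Lemma le_refl_in : {in X, reflexive le}.
Proof. by move=> x Xx; have := le_total Xx Xx; rewrite orbb. Qed.

Lemma lexle_total_in s t : all X s -> all X t -> lexle le s t || lexle le t s.
Proof.
elim: s t => [|x s IH] [|y t] //= /andP[Xx Xs] /andP[Xy Xt].
by have := le_total Xx Xy; case: (le x y); case: (le y x) => //= _; apply: IH.
Qed.

Lemma lexle_trans_in s t u : all X s -> all X t -> all X u ->
  lexle le s t -> lexle le t u -> lexle le s u.
Proof.
elim: s t u => [|x s IH] [|y t] [|z u] //= /andP[Xx Xs] /andP[Xy Xt] /andP[Xz Xu].
have tr a b c := @le_trans b a c.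
have := tr _ _ _ Xx Xy Xz; have := tr _ _ _ Xz Xy Xx; have := tr _ _ _ Xy Xz Xx.
have := tr _ _ _ Xz Xx Xy; have := tr _ _ _ Xx Xz Xy; have := tr _ _ _ Xy Xx Xz.
have := IH t u Xs Xt Xu.
by case: (le x y); case: (le y x); case: (le y z); case: (le z y);
   case: (le x z); case: (le z x) => //= *; auto.
Qed.

Lemma subseqs_all s C : all X s -> C \in subseqs s -> all X C.
Proof. by move=> /allP Xs; rewrite mem_subseqs => /mem_subseq Cs; apply/allP => x /Cs /Xs. Qed.

Lemma lexmax_exists s : all X s -> exists2 C, C \in subseqs s & lexmax le s C.
Proof.
move=> Xs; have XC := subseqs_all Xs.
have lexle_total : {in subseqs s &, total (lexle le)}.
  by move=> C D /XC ? /XC ?; apply: lexle_total_in.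
have lexle_trans : {in subseqs s & &, transitive (lexle le)}.
  by move=> D C E /XC ? /XC ? /XC ?; apply: lexle_trans_in.
have subseqs_neq0 : subseqs s != [::].
  by apply: contraTneq (subseq_refl s); rewrite -mem_subseqs => ->.
have [C Cs Cmax] := exists_max_in lexle_total lexle_trans subseqs_neq0.
by exists C => //; apply/allP.
Qed.

Lemma lexmax_leE s t C D : all X s -> all X t ->
  C \in subseqs s -> lexmax le s C -> D \in subseqs t -> lexmax le t D ->
  lexmax_le s t = lexle le C D.
Proof.
move=> Xs Xt Cs Cmax Dt Dmax; have XC := subseqs_all Xs Cs; have XD := subseqs_all Xt Dt.
apply/hasP/idP => [[C' C's /andP[C'max /hasP[D' D't /andP[D'max C'D']]]]|CD].
  have XC' := subseqs_all Xs C's; have XD' := subseqs_all Xt D't.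
  have CC' : lexle le C C' by move/allP: C'max; apply.
  have D'D : lexle le D' D by move/allP: Dmax; apply.
  by apply: (lexle_trans_in XC XD' XD) D'D; apply: (lexle_trans_in XC XC' XD').
by exists C => //; rewrite Cmax; apply/hasP; exists D => //; rewrite Dmax.
Qed.

Lemma lexmax_le_total s t : all X s -> all X t -> lexmax_le s t || lexmax_le t s.
Proof.
move=> Xs Xt; have [C Cs Cmax] := lexmax_exists Xs; have [D Dt Dmax] := lexmax_exists Xt.
rewrite (lexmax_leE Xs Xt Cs Cmax Dt Dmax) (lexmax_leE Xt Xs Dt Dmax Cs Cmax).
by apply: lexle_total_in; [apply: subseqs_all Cs|apply: subseqs_all Dt].
Qed.

Lemma lexmax_le_trans s t u : all X s -> all X t -> all X u ->
  lexmax_le s t -> lexmax_le t u -> lexmax_le s u.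
Proof.
move=> Xs Xt Xu; have [C Cs Cmax] := lexmax_exists Xs.
have [D Dt Dmax] := lexmax_exists Xt; have [E Eu Emax] := lexmax_exists Xu.
rewrite (lexmax_leE Xs Xt Cs Cmax Dt Dmax) (lexmax_leE Xt Xu Dt Dmax Eu Emax).
rewrite (lexmax_leE Xs Xu Cs Cmax Eu Emax).
by apply: lexle_trans_in; [apply: subseqs_all Cs|apply: subseqs_all Dt|apply: subseqs_all Eu].
Qed.

Lemma lexmax_le_single x t : X x -> all X t -> lexmax_le [:: x] t = has (le x) t.
Proof.
move=> Xx Xt; have Xsx : all X [:: x] by rewrite /= Xx.
have xmax : lexmax le [:: x] [:: x].
  by apply: lexmax_self => _ _ /[!inE] /eqP-> /eqP->; apply: le_refl_in.
have [D Dt Dmax] := lexmax_exists Xt.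
have xx : [:: x] \in subseqs [:: x] by rewrite mem_subseqs subseq_refl.
rewrite (lexmax_leE Xsx Xt xx xmax Dt Dmax); apply/idP/hasP => [|[y yt xy]].
  move: Dt; rewrite mem_subseqs; case: D {Dmax} => // d D dDt.
  rewrite lexle_single_cons => xd; exists d => //.
  by apply: mem_subseq dDt _ (mem_head _ _).
have yD : lexle le [:: y] D by move/allP: Dmax; apply; rewrite mem_subseqs sub1seq.
apply: (lexle_trans_in Xsx _ (subseqs_all Xt Dt) _ yD); first by rewrite /= (allP Xt).
by rewrite lexle_single_cons.
Qed.

End TotalPreorder.
End Lexicographic.

Lemma eq_in_lexle (T : eqType) (le1 le2 : rel T) (L s t : seq T) :
  {in L &, forall x y, le1 x y = le2 x y} -> {subset s <= L} -> {subset t <= L} ->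
  lexle le1 s t = lexle le2 s t.
Proof.
move=> le12; elim: s t => [|x s IH] [|y t] //= sL tL.
have xL := sL x (mem_head x s); have yL := tL y (mem_head y t).
rewrite !le12 // IH // => z zs; [apply: sL|apply: tL]; by rewrite inE zs orbT.
Qed.

Lemma eq_in_lexmax_le (T : eqType) (le1 le2 : rel T) (s t : seq T) :
  {in s ++ t &, forall x y, le1 x y = le2 x y} -> lexmax_le le1 s t = lexmax_le le2 s t.
Proof.
move=> le12.
have sub_st u C : {subset u <= s ++ t} -> C \in subseqs u -> {subset C <= s ++ t}.
  by move=> ust; rewrite mem_subseqs => /mem_subseq Cu x /Cu /ust.
have s_st : {subset s <= s ++ t} by move=> x xs; rewrite mem_cat xs.
have t_st : {subset t <= s ++ t} by move=> x xt; rewrite mem_cat xt orbT.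
have eq_lexmax u C : {subset u <= s ++ t} -> C \in subseqs u -> lexmax le1 u C = lexmax le2 u C.
  move=> ust Cu; apply: eq_in_all => Y Yu.
  by apply: (eq_in_lexle le12); [apply: sub_st Yu|apply: sub_st Cu].
apply: eq_in_has => C Cs; rewrite eq_lexmax //; congr (_ && _).
apply: eq_in_has => D Dt; rewrite eq_lexmax //; congr (_ && _).
by apply: (eq_in_lexle le12); [apply: sub_st Cs|apply: sub_st Dt].
Qed.

Lemma foldr_minn_le d (s : seq nat) x : x \in d :: s -> foldr minn d s <= x.
Proof.
elim: s x => [|y s IH] x; first by rewrite inE => /eqP->.
rewrite !inE => /or3P[/eqP->|/eqP->|xs] /=; first by rewrite geq_min IH ?mem_head ?orbT.
  exact: geq_minl.
by rewrite geq_min IH ?orbT // inE xs orbT.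
Qed.

Lemma foldr_minn_mem d (s : seq nat) : foldr minn d s \in d :: s.
Proof.
elim: s => [|y s IH] /=; first exact: mem_head.
rewrite /minn; case: ifP => _; first by rewrite !inE eqxx orbT.
by move: IH; rewrite !inE => /orP[]->; rewrite ?orbT.
Qed.

Lemma minsym_le (A : word) x : x \in A -> minsym A <= x.
Proof. by case: A => // y s xA; apply: foldr_minn_le; rewrite inE xA orbT. Qed.

Lemma minsym_mem (A : word) : A != [::] -> minsym A \in A.
Proof.
case: A => // y s _; have := foldr_minn_mem y (y :: s).
by rewrite /minsym /= inE => /predU1P[->|]; rewrite ?mem_head.
Qed.

Lemma maxsym_ge (A : word) x : x \in A -> x <= maxsym A.
Proof.
elim: A => [|y s IH] //=; rewrite inE => /predU1P[->|/IH xs]; first exact: leq_maxl.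
exact: leq_trans xs (leq_maxr _ _).
Qed.

Lemma flatten_wsplit n (A : word) : flatten (wsplit n A) = filter (predC1 n) A.
Proof. by elim: A => //= x s <-; case: eqP => //= _; case: (wsplit n s). Qed.

Lemma size_wsplit n (A : word) : size (wsplit n A) = (count_mem n A).+1.
Proof.
elim: A => //= x s IH; case: eqP => _ /=; first by rewrite IH.
by case: (wsplit n s) IH => [|h t] //= ->.
Qed.

Lemma wsplit_notin n (A : word) : n \notin A -> wsplit n A = [:: A].
Proof.
elim: A => //= x s IH; rewrite inE negb_or => /andP[nx /IH->].
by rewrite eq_sym (negbTE nx).
Qed.

Lemma wsplit_nseq n k : wsplit n (nseq k n) = nseq k.+1 [::].
Proof. by elim: k => //= k ->; rewrite eqxx. Qed.

Lemma mem_wsplit n (A P : word) x : P \in wsplit n A -> x \in P -> (x != n) && (x \in A).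
Proof.
move=> PA xP; have : x \in filter (predC1 n) A by rewrite -flatten_wsplit; apply/flattenP; exists P.
by rewrite mem_filter.
Qed.

Lemma wsplit_cover n (A : word) x : x != n -> x \in A -> exists2 P, P \in wsplit n A & x \in P.
Proof. by move=> xn xA; apply/flattenP; rewrite flatten_wsplit mem_filter /= xn. Qed.

Lemma size_wsplit_lt n (A P : word) : n \in A -> P \in wsplit n A -> size P < size A.
Proof.
move=> nA PA; have : size P <= count (predC1 n) A.
  rewrite -size_filter -flatten_wsplit size_flatten.
  by rewrite (perm_sumn (perm_map size (perm_to_rem PA))) leq_addr.
have : count (pred1 n) A + count (predC1 n) A = size A := count_predC _ _.
have : 0 < count_mem n A by rewrite -has_count; apply/hasP; exists n => //=.
lia.
Qed.

Definition within m d : pred word := fun A => all (fun x => m <= x < m + d) A.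

Lemma within0 m (A : word) : within m 0 A -> A = [::].
Proof. by case: A => //= x s /andP[]; rewrite addn0; lia. Qed.

Lemma within_maxsym (A : word) : within 0 (maxsym A).+1 A.
Proof. by apply/allP => x /maxsym_ge. Qed.

Lemma within_mono m n d (A : word) : m <= n -> all (leq n) A -> within m d A -> within n d A.
Proof. move=> mn /allP nA /allP WA; apply/allP => x xA; have := nA x xA; have := WA x xA; lia. Qed.

Lemma within_minsym m d (A : word) : within m d A -> within (minsym A) d A.
Proof.
have [->|A0] := eqVneq A [::]; first by [].
move=> WA; apply: (within_mono _ _ WA); last by apply/allP => x /minsym_le.
by have /andP[] := allP WA _ (minsym_mem A0).
Qed.

Lemma within_wsplit m d (A P : word) : within m d.+1 A -> P \in wsplit m A -> within m.+1 d P.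
Proof.
move=> /allP WA PA; apply/allP => x xP; have /andP[xm xA] := mem_wsplit PA xP.
have := WA x xA; move: xm; lia.
Qed.

Lemma within_wsplit_cat m d (A B P Q : word) : within m d.+1 (A ++ B) ->
  P \in wsplit (minsym (A ++ B)) A ++ wsplit (minsym (A ++ B)) B ->
  Q \in wsplit (minsym (A ++ B)) A ++ wsplit (minsym (A ++ B)) B ->
  within (minsym (A ++ B)).+1 d (P ++ Q).
Proof.
move=> /within_minsym; rewrite /within !all_cat => /andP[WA WB].
have WS R : R \in wsplit (minsym (A ++ B)) A ++ wsplit (minsym (A ++ B)) B ->
    within (minsym (A ++ B)).+1 d R.
  by rewrite mem_cat => /orP[]; apply: within_wsplit.
by move=> /WS WP /WS WQ; apply/andP.
Qed.

Lemma wle_fuel_nil f (A B : word) : A ++ B = [::] -> wle_fuel f A B.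
Proof. by case: A B => [|//] [|//] _; case: f. Qed.

Lemma wle_fuelS f (A B : word) : A ++ B != [::] ->
  wle_fuel f.+1 A B =
  lexmax_le (wle_fuel f) (wsplit (minsym (A ++ B)) A) (wsplit (minsym (A ++ B)) B).
Proof. by rewrite /=; case: (A ++ B). Qed.

(* Each unfolding raises the smallest symbol, so any fuel exceeding the width
   of a window containing all symbols gives the same answer. *)
Lemma wle_fuel_irrelevant f g m1 m2 (A B : word) :
  within m1 f (A ++ B) -> within m2 g (A ++ B) -> wle_fuel f A B = wle_fuel g A B.
Proof.
elim: f g m1 m2 A B => [|f IH] g m1 m2 A B Wf Wg.
  by rewrite (wle_fuel_nil g (within0 Wf)).
have [AB0|AB0] := eqVneq (A ++ B) [::]; first by rewrite !wle_fuel_nil.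
case: g Wg => [/within0 AB0'|g Wg]; first by rewrite AB0' in AB0.
rewrite !wle_fuelS //; apply: eq_in_lexmax_le => P Q PS QS.
by apply: IH; apply: within_wsplit_cat PS QS; [apply: Wf|apply: Wg].
Qed.

Lemma wle_unfold (A B : word) : A ++ B != [::] ->
  wle A B = lexmax_le wle (wsplit (minsym (A ++ B)) A) (wsplit (minsym (A ++ B)) B).
Proof.
move=> AB0; rewrite /wle wle_fuelS //; apply: eq_in_lexmax_le => P Q PS QS.
apply: wle_fuel_irrelevant (within_maxsym _).
exact: within_wsplit_cat (within_maxsym _) PS QS.
Qed.

Lemma wle_wsplit_refl m (A B : word) : all (leq m) (A ++ B) ->
  (m \notin A ++ B -> wle A A && wle B B) ->
  wle A B = lexmax_le wle (wsplit m A) (wsplit m B).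
Proof.
move=> mAB reflAB; have [mAB'|/[dup]/reflAB/andP[AA BB]] := boolP (m \in A ++ B).
  have AB0 : A ++ B != [::] by apply: contraTneq mAB' => ->.
  suff -> : m = minsym (A ++ B) by apply: wle_unfold.
  by apply/eqP; rewrite eqn_leq minsym_le // (allP mAB) // minsym_mem.
by rewrite mem_cat negb_or => /andP[mA mB]; rewrite !wsplit_notin // lexmax_le1.
Qed.

(* Induction on the width of the window: splitting at its bottom [m] leaves
   pieces in the narrower window above [m].  Transitivity needs the three words
   to be split at the common point [m] rather than at each pair's minimum. *)
Lemma wle_preorder_within d m :
  {in within m d &, total wle} /\ {in within m d & &, transitive wle}.
Proof.
elim: d m => [|d IH] m.
  by split=> [A B|B A C] /within0-> /within0-> => [|/within0->].
have [IHtotal IHtrans] := IH m.+1.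
have pieces A : within m d.+1 A -> all (within m.+1 d) (wsplit m A).
  by move=> WA; apply/allP => P; apply: within_wsplit.
have wleE A B : within m d.+1 A -> within m d.+1 B ->
    wle A B = lexmax_le wle (wsplit m A) (wsplit m B).
  move=> WA WB; apply: wle_wsplit_refl.
    by rewrite all_cat; apply/andP; split; [apply: sub_all WA|apply: sub_all WB] => x /andP[].
  rewrite mem_cat negb_or => /andP[mA mB].
  have narrow C : within m d.+1 C -> m \notin C -> within m.+1 d C.
    by move=> WC mC; apply: within_wsplit WC _; rewrite wsplit_notin ?mem_head.
  by rewrite !(le_refl_in IHtotal) //; apply: narrow.
split=> [A B WA WB|B A C WB WA WC]; rewrite !wleE //.
  by apply: (lexmax_le_total IHtotal IHtrans); apply: pieces.
by apply: (lexmax_le_trans IHtotal IHtrans); apply: pieces.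
Qed.

Lemma wle_total : total wle.
Proof.
move=> A B; have [tot _] := wle_preorder_within (maxsym (A ++ B)).+1 0.
by have := within_maxsym (A ++ B); rewrite /within all_cat => /andP[WA WB]; apply: tot.
Qed.

Lemma wle_trans : transitive wle.
Proof.
move=> B A C; have [_ tr] := wle_preorder_within (maxsym (A ++ B ++ C)).+1 0.
by have := within_maxsym (A ++ B ++ C); rewrite /within !all_cat => /and3P[WA WB WC]; apply: tr.
Qed.

Lemma wle_refl : reflexive wle.
Proof. by move=> A; have := wle_total A A; rewrite orbb. Qed.

Lemma wle_wsplit m (A B : word) : all (leq m) (A ++ B) ->
  wle A B = lexmax_le wle (wsplit m A) (wsplit m B).
Proof. by move=> mAB; apply: wle_wsplit_refl => // _; rewrite !wle_refl. Qed.

Lemma wle_lexmax_exists (s : seq word) : exists2 C, C \in subseqs s & lexmax wle s C.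
Proof. exact: (lexmax_exists (X := predT) (in2W wle_total) (in3W wle_trans) (all_predT s)). Qed.

Lemma lexle_wle_trans : transitive (lexle wle).
Proof. by move=> t s u; apply: (lexle_trans_in (in3W wle_trans)); apply: all_predT. Qed.

Lemma wleE m (A B : word) C D : all (leq m) (A ++ B) ->
  C \in subseqs (wsplit m A) -> lexmax wle (wsplit m A) C ->
  D \in subseqs (wsplit m B) -> lexmax wle (wsplit m B) D ->
  wle A B = lexle wle C D.
Proof.
move=> mAB Cs Cmax Dt Dmax; rewrite (wle_wsplit mAB).
exact: (lexmax_leE (X := predT) (in3W wle_trans) (all_predT _) (all_predT _) Cs Cmax Dt Dmax).
Qed.

Lemma wle_has_wsplit m (X w : word) : all (fun x => m < x) X -> all (leq m) w ->
  wle X w = has (wle X) (wsplit m w).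
Proof.
move=> mX mw; have mX' : m \notin X by apply/negP => /(allP mX); rewrite ltnn.
rewrite (wle_wsplit (m := m)); last by rewrite all_cat mw andbT; apply: sub_all mX => x /ltnW.
rewrite wsplit_notin //.
by rewrite (lexmax_le_single (X := predT) (in2W wle_total) (in3W wle_trans)) ?all_predT.
Qed.

Lemma wle_nil (w : word) : wle [::] w.
Proof.
have [n] := ubnP (size w); elim: n w => // n IH w /ltnSE wn.
have [->|w0] := eqVneq w [::]; first exact: wle_refl.
have mw := minsym_mem w0.
rewrite (wle_has_wsplit (m := minsym w)) //; last by apply/allP => x /minsym_le.
have [P PS] : exists P, P \in wsplit (minsym w) w.
  by case: (wsplit _ w) (size_wsplit (minsym w) w) => // P ps _; exists P; rewrite mem_head.
by apply/hasP; exists P => //; apply: IH; have := size_wsplit_lt mw PS; lia.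
Qed.

Lemma wlt_nil (w : word) : w != [::] -> wlt [::] w.
Proof.
move=> w0; rewrite /wlt wle_nil /=; have mw := minsym_mem w0.
have [C Cs Cmax] := wle_lexmax_exists (wsplit (minsym w) w).
rewrite (wleE (C := C) (D := [:: [::]]) _ Cs Cmax) ?mem_subseqs //; last first.
  by rewrite cats0; apply/allP => x /minsym_le.
apply/negP => CD; have := lexle_wle_trans (lexmax_lexle Cmax) CD; apply/negP.
apply: lexle_uniformN => [|_ P /[!inE] /eqP-> _]; last exact: wle_nil.
by rewrite size_wsplit /= ltnS -has_count; apply/hasP; exists (minsym w) => //=.
Qed.

Lemma wlt_of_pieces (w X : word) : w != [::] -> all (fun x => minsym w < x) X ->
  (forall P, P \in wsplit (minsym w) w -> wlt P X) -> wlt w X.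
Proof.
move=> w0 mX Plt; have XNw : ~~ wle X w.
  rewrite (wle_has_wsplit mX); last by apply/allP => x /minsym_le.
  by apply/hasPn => P /Plt /andP[].
by rewrite /wlt XNw andbT; have := wle_total w X; rewrite (negbTE XNw) orbF.
Qed.

Lemma inW_wsplit alpha n (A P : word) : inW alpha A -> P \in wsplit n A -> inW alpha P.
Proof.
case: alpha => //= a /allP aA PA; apply/allP => x xP; apply: aA.
by have /andP[] := mem_wsplit PA xP.
Qed.

Lemma wlt_singleton_succ a (w : word) : inW (Some a) w -> wlt w [:: a.+1].
Proof.
have [n] := ubnP (size w); elim: n w => // n IH w /ltnSE wn aw.
have [->|w0] := eqVneq w [::]; first exact: wlt_nil.
have mw := minsym_mem w0.
apply: wlt_of_pieces => //= [|P PS]; first by rewrite andbT ltnS (allP aw).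
by apply: IH; [have := size_wsplit_lt mw PS; lia|apply: inW_wsplit aw PS].
Qed.

Lemma wle_singleton_succ a (z : word) : ~~ inW (Some a) z -> wle [:: a.+1] z.
Proof.
have [n] := ubnP (size z); elim: n z => // n IH z /ltnSE zn.
rewrite /= -has_predC => /hasP[x xz /= ax].
have z0 : z != [::] by apply: contraTneq xz => ->.
have mz := minsym_mem z0; have mz_le y : y \in z -> minsym z <= y := @minsym_le z y.
have [mza|amz] := leqP (minsym z) a.
  rewrite (wle_has_wsplit (m := minsym z)) /= ?ltnS ?mza //; last exact/allP.
  have xm : x != minsym z by apply/eqP => xm; move: ax; rewrite xm mza.
  have [P PS xP] := wsplit_cover xm xz.
  apply/hasP; exists P => //; apply: IH; first by have := size_wsplit_lt mz PS; lia.
  by rewrite /= -has_predC; apply/hasP; exists x.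
have [D Ds Dmax] := wle_lexmax_exists (wsplit a.+1 z).
have split_single : wsplit a.+1 [:: a.+1] = nseq 2 [::] by rewrite /= eqxx.
have aAz : all (leq a.+1) ([:: a.+1] ++ z).
  by rewrite /= leqnn; apply/allP => y /mz_le; apply: leq_trans.
rewrite (wleE (C := nseq 2 [::]) aAz _ _ Ds Dmax) ?split_single ?mem_subseqs //.
apply: lexle_wle_trans (lexmax_lexle Dmax).
have [az|az] := boolP (a.+1 \in z).
  apply: lexle_uniform => [|Y P]; last by rewrite mem_nseq => /andP[_ /eqP->] _; apply: wle_nil.
  by rewrite size_wsplit ltnS -has_count; apply/hasP; exists a.+1 => //=.
by rewrite wsplit_notin // lexle_cons_lt ?wle_nil //; case/andP: (wlt_nil z0).
Qed.

Lemma wlt_nseq a i j : i < j -> wlt (nseq i a) (nseq j a).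
Proof.
move=> ij; have nil_le k l : {in nseq k [::] & nseq l [::], forall P Q : word, wle P Q}.
  by move=> P Q; rewrite !mem_nseq => /andP[_ /eqP->] /andP[_ /eqP->]; apply: wle_refl.
have wle_nseq k l : wle (nseq k a) (nseq l a) = lexle wle (nseq k.+1 [::]) (nseq l.+1 [::]).
  apply: (wleE (m := a));
    rewrite ?wsplit_nseq ?mem_subseqs ?subseq_refl ?(lexmax_self (nil_le _ _)) //.
  by rewrite all_cat !all_nseq leqnn !orbT.
rewrite /wlt !wle_nseq lexle_uniform ?size_nseq ?ltnS 1?ltnW // andTb.
by apply: lexle_uniformN; rewrite ?size_nseq ?ltnS //; apply: nil_le.
Qed.

Lemma wlt_nseq_size a (w : word) j : inW (Some a) w -> size w < j -> wlt w (nseq j a).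
Proof.
have [n] := ubnP (size w); elim: n w => // n IH w /ltnSE wn aw wj.
have [/all_pred1P->|] := boolP (all (pred1 a) w); first exact: wlt_nseq.
rewrite -has_predC => /hasP[x xw /= xa].
have w0 : w != [::] by apply: contraTneq xw => ->.
have mw := minsym_mem w0.
have ma : minsym w < a by have := minsym_le xw; have := allP aw x xw; move: xa; lia.
apply: wlt_of_pieces => // [|P PS]; first by rewrite all_nseq ma orbT.
have := size_wsplit_lt mw PS => Pw.
by apply: IH; [lia|apply: inW_wsplit aw PS|lia].
Qed.

Lemma exists_max_nseq_wlt a (c : word) : c != [::] -> inW (Some a) c ->
  exists j, wlt (nseq j a) c /\ ~~ wlt (nseq j.+1 a) c.
Proof.
move=> c0 ac; have ex : exists j, wlt (nseq j a) c by exists 0; apply: wlt_nil.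
have bound j : wlt (nseq j a) c -> j <= size c.
  move=> /andP[_ cNle]; rewrite leqNgt; apply: contra cNle.
  by move=> /(wlt_nseq_size ac) /andP[].
have [j jc jmax] := ex_maxnP ex bound.
by exists j; split => //; apply/negP => /jmax; rewrite ltnn.
Qed.

Lemma isNF_nseq a k : isNF (nseq k a).
Proof.
case: k => // k; have minsym_nseq : minsym (nseq k.+1 a) = a.
  by have := minsym_mem (A := nseq k.+1 a) isT; rewrite mem_nseq => /andP[_ /eqP].
rewrite /isNF size_nseq.
have -> : isNF_fuel k.+2 (nseq k.+1 a) =
    sorted (fun X Y => wle Y X) (wsplit (minsym (nseq k.+1 a)) (nseq k.+1 a)) &&
    all (isNF_fuel k.+1) (wsplit (minsym (nseq k.+1 a)) (nseq k.+1 a)) by [].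
rewrite minsym_nseq wsplit_nseq all_nseq orbT andbT {minsym_nseq}.
by elim: k => //= k ->; rewrite wle_refl.
Qed.

Lemma wlt_wle_trans (A B C : word) : wlt A B -> wle B C -> wlt A C.
Proof.
move=> /andP[AB NBA] BC; rewrite /wlt (wle_trans AB BC).
by apply: contra NBA => /(wle_trans BC).
Qed.

Lemma wlt_singleton_succ_diamond a (y z : word) :
  wlt y [:: a.+1] -> diamond_graph a y z -> wlt z [:: a.+1].
Proof.
move=> /andP[_ Ny] /and3P[_ zy _]; have inWy : inW (Some a) y.
  by apply: contraR Ny => /wle_singleton_succ.
have inWya : inW (Some a) (rcons y a) by rewrite /= all_rcons leqnn.
apply: wlt_singleton_succ; apply: contraT => /wle_singleton_succ az.
by have /andP[_] := wlt_singleton_succ inWya; rewrite (wle_trans az zy).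
Qed.

Lemma inW_singleton_succ alpha a (x : word) :
  inW alpha x -> ~~ inW (Some a) x -> inW alpha [:: a.+1].
Proof.
case: alpha => //= b /allP xb; rewrite -has_predC => /hasP[y /xb yb /=].
by rewrite -ltnNge andbT => /leq_trans; apply.
Qed.

Lemma inWN_nseq alpha a j : (if alpha is Some b then a <= b else true) -> inWN alpha (nseq j a).
Proof. by rewrite /inWN isNF_nseq andbT; case: alpha => //= b ab; rewrite all_nseq ab orbT. Qed.

Lemma diamond_graph_nseq a j : diamond_graph a (nseq j a) (nseq j.+1 a).
Proof.
rewrite /diamond_graph; have -> : rcons (nseq j a) a = nseq j.+1 a by elim: j => //= j ->.
by rewrite isNF_nseq /wequiv wle_refl.
Qed.

Definition diamond3_closed alpha (c : word) : Prop :=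
  forall y z, inWN alpha y -> inWN alpha z -> wlt y c -> diamond_graph 3 y z -> wlt z c.

Definition diamond3_closed_form : form :=
  FNot (FEx 3 (FEx 4 (FAnd (FLt 3 1) (FAnd (FD3 3 4) (FNot (FLt 4 1)))))).

Definition below_closed_form : form :=
  FNot (FEx 1 (FAnd diamond3_closed_form (FAnd (FEx 2 (FLt 2 1)) (FNot (FLt 0 1))))).

Lemma sat_below_closed alpha e : sat alpha e below_closed_form <->
  forall c, inWN alpha c -> diamond3_closed alpha c ->
    (exists2 x, inWN alpha x & wlt x c) -> wlt (e 0) c.
Proof.
rewrite /= /upd /=; split=> [below c Wc c_closed [x Wx xc]|].
  apply/negPn/negP => Nc; apply: below; exists c; split=> //.
  split; last by split; [exists x|apply/negP].
  by move=> [y [Wy [z [Wz [yc [yz]]]]]]; apply; apply: c_closed Wy Wz yc yz.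
move=> below [c [Wc [c_closed [[x [Wx xc]] Nc]]]]; apply: Nc.
apply: below => // [y z Wy Wz yc yz|]; last by exists x.
apply/negPn/negP => Nzc; apply: c_closed; exists y; split=> //; exists z.
by do !split=> //; apply/negP.
Qed.

Unset Implicit Arguments.
Theorem lemma5 (alpha : option nat) (h3 : if alpha is Some a then 3 <= a else true) :
  fo_definable alpha (fun A => inWN (Some 3) A).
Proof.
exists below_closed_form => e We; rewrite sat_below_closed.
have /andP[We0 NF0] := We 0; rewrite /inWN NF0 andbT.
split=> [below|e0W3 c Wc c_closed [x _ xc]].
  apply: contraT => e0N3.
  have Wfour : inWN alpha [:: 4].
    by rewrite /inWN (inW_singleton_succ We0 e0N3) (isNF_nseq 4 1).
  have four_closed : diamond3_closed alpha [:: 4].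
    by move=> y z _ _; apply: wlt_singleton_succ_diamond.
  have nil_below : exists2 x, inWN alpha x & wlt x [:: 4].
    by exists [::]; [case: (alpha)|apply: wlt_nil].
  have /andP[_] := below _ Wfour four_closed nil_below.
  by rewrite (wle_singleton_succ e0N3).
have [cW3|cN3] := boolP (inW (Some 3) c); last first.
  exact: wlt_wle_trans (wlt_singleton_succ e0W3) (wle_singleton_succ cN3).
have c0 : c != [::] by apply: contraTneq xc => ->; rewrite /wlt wle_nil andbF.
have [j [jc /negP[]]] := exists_max_nseq_wlt c0 cW3.
by apply: c_closed jc (diamond_graph_nseq 3 j); apply: inWN_nseq.
Qed.
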